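(* In the setting of the context, take $\beta>0$ and $c>0$. Then for $\mu\in\mathbb{R}$ one has $i\mu\in\overline{W_{\overline{\mathbb{R}}\times\{\beta\}}(T)\setminus i\mathbb{R}}$ if and only if $\mu=0$ or $\mu$ is a real solution of $$q_\beta(\mu):=\mu^4+2d\mu^3+(2c+d^2)\mu^2+d\left(\frac{\beta}{2}+2c\right)\mu+c(\beta+c)=0.$$ The same statement holds also if $c=0$, with the exception that $0$ is then not in the set $\overline{W_{\overline{\mathbb{R}}\times\{\beta\}}(T)\setminus i\mathbb{R}}$.
   Context: Let $c\ge0$, $d>0$, $\delta_\pm:=\pm\sqrt{c-d^2/4}-id/2$ (principal square root). For real $\alpha,\beta$ let $p_{(\alpha,\beta)}(\omega):=(\alpha-\omega^2)(c-id\omega-\omega^2)-\beta\omega^2$ with roots $r_1,\dots,r_4$ labelled continuously in $(\alpha,\beta)\in\mathbb{R}^2$ and extended by limits to $\alpha=\pm\infty$ (where the roots are $\delta_+,\delta_-$ and $\infty$ twice), with values in the Riemann sphere $\overline{\mathbb{C}}$. For fixed $\beta$, $W_{\overline{\mathbb{R}}\times\{\beta\}}(T):=\bigcup_{n=1}^4\{r_n(\alpha,\beta):\alpha\in\mathbb{R}\cup\{\pm\infty\}\}$; the overline denotes closure in $\overline{\mathbb{C}}$. *)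

From Stdlib Require Import Reals.
From Coquelicot Require Import Coquelicot.
Open Scope R_scope.

(* Points of the Riemann sphere: Some z is the finite point z, None is infinity. *)
Definition sphere := option C.

Definition psqrt (x : R) : C :=
  if Rle_dec 0 x then (sqrt x, 0) else (0, sqrt (- x)).

Definition delta_plus (c d : R) : C :=
  Cminus (psqrt (c - d ^ 2 / 4)) (Cmult Ci (RtoC (d / 2))).
Definition delta_minus (c d : R) : C :=
  Cminus (Copp (psqrt (c - d ^ 2 / 4))) (Cmult Ci (RtoC (d / 2))).

Definition pab (c d alpha beta : R) (w : C) : C :=
  Cminus
    (Cmult (Cminus (RtoC alpha) (Cmult w w))
           (Cminus (Cminus (RtoC c) (Cmult (Cmult Ci (RtoC d)) w)) (Cmult w w)))
    (Cmult (RtoC beta) (Cmult w w)).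

(* W_{\bar R x {beta}}(T): union over alpha in R u {+-oo} of the roots of
   p_(alpha,beta); for alpha = +-oo the roots are delta_+, delta_- and oo. *)
Definition W_beta (c d beta : R) (z : sphere) : Prop :=
  match z with
  | Some w => (exists alpha : R, pab c d alpha beta w = RtoC 0)
              \/ w = delta_plus c d \/ w = delta_minus c d
  | None => True
  end.

Definition in_iR (z : sphere) : Prop :=
  match z with Some w => fst w = 0 | None => False end.

Definition chordal (z w : sphere) : R :=
  match z, w with
  | Some a, Some b =>
      2 * Cmod (Cminus a b) / sqrt ((1 + Cmod a ^ 2) * (1 + Cmod b ^ 2))
  | Some a, None | None, Some a => 2 / sqrt (1 + Cmod a ^ 2)
  | None, None => 0
  end.

Definition in_sphere_closure (S : sphere -> Prop) (z : sphere) : Prop :=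
  forall eps : R, 0 < eps -> exists w, S w /\ chordal z w < eps.

Definition W_minus_iR (c d beta : R) (z : sphere) : Prop :=
  W_beta c d beta z /\ ~ in_iR z.

Definition q_beta (c d beta mu : R) : R :=
  mu ^ 4 + 2 * d * mu ^ 3 + (2 * c + d ^ 2) * mu ^ 2
  + d * (beta / 2 + 2 * c) * mu + c * (beta + c).

(* Write w = x + i y and e(w) = c - i d w - w^2, so that p(w) = (alpha - w^2) e(w) - beta w^2.
   The imaginary part of p(w) * conj(e(w)) does not involve alpha; it equals - x * F(x^2, y)
   with F(s, y) = 2 y q_beta(y) + s L(y) + 2 y s^2.  For x <> 0 the point w lies in W iff
   F(x^2, y) = 0: if e(w) <> 0 a real alpha kills the real part, and e(w) = 0 means w = delta_+-.
   Hence i mu lies in the closure of W \ iR iff zeros (x, y) of F(x^2, y) with x <> 0 cluster at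
   (0, mu).  This forces F(0, mu) = 2 mu q_beta(mu) = 0.  Conversely, at a root of odd
   multiplicity F(x^2, .) changes sign near mu for small x; at a double root the sign of L(mu)
   is opposite to that of F(0, .) on either side, and q_beta has no roots of multiplicity 4.
   For c = 0, F(0, .) >= 0 near the root 0 while L(0) > 0, so F > 0 there for x <> 0. *)

From Stdlib Require Import Reals Lra Psatz.
From Coquelicot Require Import Coquelicot.
Open Scope R_scope.

Lemma chordal_le_dist (a b : C) : chordal (Some a) (Some b) <= 2 * Cmod (a - b).
Proof.
  unfold chordal.
  set (S := sqrt ((1 + Cmod a ^ 2) * (1 + Cmod b ^ 2))).
  assert (HS : 1 <= S).
  { rewrite <- sqrt_1. apply sqrt_le_1_alt.
    pose proof (pow2_ge_0 (Cmod a)); pose proof (pow2_ge_0 (Cmod b)); nra. }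
  pose proof (Cmod_ge_0 (a - b)).
  unfold Rdiv. rewrite <- (Rmult_1_r (2 * Cmod (a - b))) at 2.
  apply Rmult_le_compat_l; [lra|].
  rewrite <- Rinv_1. apply Rinv_le_contravar; lra.
Qed.

Lemma dist_lt_of_chordal_lt (a b : C) (eps : R) :
  0 < eps -> eps ^ 2 * (1 + Cmod a ^ 2) <= 1 ->
  chordal (Some a) (Some b) < eps -> Cmod (a - b) < eps * (1 + Cmod a ^ 2).
Proof.
  intros He HeK Hch. unfold chordal in Hch.
  set (K := 1 + Cmod a ^ 2) in *. set (L := 1 + Cmod b ^ 2) in *.
  set (D := Cmod (a - b)) in *.
  assert (HK : 1 <= K) by (unfold K; pose proof (pow2_ge_0 (Cmod a)); lra).
  assert (HD : 0 <= D) by apply Cmod_ge_0.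
  assert (HL : L <= 2 * K + 2 * D ^ 2).
  { assert (Hb : Cmod b <= Cmod a + D).
    { replace b with (a + - (a - b))%C at 1 by (unfold Cminus; ring).
      unfold D. rewrite <- (Cmod_opp (a - b)). apply Cmod_triangle. }
    pose proof (Cmod_ge_0 a); pose proof (Cmod_ge_0 b).
    assert (Cmod b ^ 2 <= (Cmod a + D) ^ 2) by (apply pow_incr; lra).
    pose proof (pow2_ge_0 (Cmod a - D)).
    unfold L, K. nra. }
  assert (HKL : 0 < K * L) by (unfold L; pose proof (pow2_ge_0 (Cmod b)); nra).
  assert (Hsq : 4 * D ^ 2 < eps ^ 2 * (K * L)).
  { pose proof (sqrt_lt_R0 _ HKL). pose proof (pow2_sqrt (K * L) (Rlt_le _ _ HKL)).
    assert (2 * D < eps * sqrt (K * L)).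
    { apply (Rmult_lt_compat_r (sqrt (K * L))) in Hch; [|lra].
      unfold Rdiv in Hch. rewrite Rmult_assoc, Rinv_l in Hch; lra. }
    nra. }
  assert (eps ^ 2 * (K * L) <= eps ^ 2 * K * (2 * K + 2 * D ^ 2)).
  { rewrite <- Rmult_assoc. apply Rmult_le_compat_l; [nra | exact HL]. }
  assert (eps ^ 2 * K * (2 * D ^ 2) <= 2 * D ^ 2).
  { pose proof (pow2_ge_0 D). nra. }
  assert (D ^ 2 < (eps * K) ^ 2) by nra.
  apply Rsqr_incrst_0; unfold Rsqr; nra.
Qed.

Lemma chordal_infinity_gt (a : C) (eps : R) :
  0 < eps -> eps ^ 2 * (1 + Cmod a ^ 2) <= 1 -> eps < chordal (Some a) None.
Proof.
  intros He HeK. unfold chordal.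
  set (K := 1 + Cmod a ^ 2) in *.
  assert (HK : 0 < K) by (unfold K; pose proof (pow2_ge_0 (Cmod a)); lra).
  pose proof (sqrt_lt_R0 _ HK). pose proof (pow2_sqrt K (Rlt_le _ _ HK)).
  apply (Rmult_lt_reg_r (sqrt K)); [lra|].
  unfold Rdiv. rewrite Rmult_assoc, Rinv_l by lra. nra.
Qed.

Lemma in_sphere_closure_Some (S : sphere -> Prop) (a : C) :
  in_sphere_closure S (Some a) <->
  forall r, 0 < r -> exists b, S (Some b) /\ Cmod (a - b) < r.
Proof.
  split.
  - intros Hcl r Hr.
    set (K := 1 + Cmod a ^ 2).
    assert (HK : 1 <= K) by (unfold K; pose proof (pow2_ge_0 (Cmod a)); lra).
    set (m := Rmin 1 r).
    assert (Hm : 0 < m /\ m <= 1 /\ m <= r).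
    { unfold m. pose proof (Rmin_l 1 r); pose proof (Rmin_r 1 r).
      pose proof (Rmin_pos 1 r Rlt_0_1 Hr). lra. }
    assert (He : 0 < m / K) by (apply Rdiv_lt_0_compat; lra).
    assert (HeK : (m / K) ^ 2 * K <= 1).
    { replace ((m / K) ^ 2 * K) with (m ^ 2 / K) by (field; lra).
      apply Rmult_le_reg_r with K; [lra|]. unfold Rdiv. rewrite Rmult_assoc, Rinv_l; nra. }
    destruct (Hcl (m / K) He) as [[b|] [Hb Hch]].
    + exists b. split; [exact Hb|].
      apply (Rlt_le_trans _ (m / K * K)); [exact (dist_lt_of_chordal_lt a b _ He HeK Hch)|].
      replace (m / K * K) with m by (field; lra). lra.
    + pose proof (chordal_infinity_gt a _ He HeK). lra.
  - intros H eps He.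
    destruct (H (eps / 2)) as [b [Hb Hd]]; [lra|].
    exists (Some b). split; [exact Hb|].
    pose proof (chordal_le_dist a b). lra.
Qed.

Definition quad_pencil (f0 f1 f2 : R -> R) (s y : R) : R :=
  f0 y + s * f1 y + s ^ 2 * f2 y.

Definition zeros_cluster (G : R -> R -> R) (mu : R) : Prop :=
  forall r, 0 < r ->
  exists x y, x <> 0 /\ Rabs x < r /\ Rabs (y - mu) < r /\ G x y = 0.

Definition eventually_pos (g : R -> R) : Prop :=
  exists del, 0 < del /\ forall x, 0 < x < del -> 0 < g x.

Lemma continuity_pos_near (f : R -> R) (y0 : R) :
  continuity f -> 0 < f y0 ->
  exists del, 0 < del /\ forall y, Rabs (y - y0) < del -> 0 < f y.
Proof.
  intros Hf Hpos. destruct (Hf y0 (f y0) Hpos) as [del [Hdel Hnear]].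
  exists del. split; [exact Hdel|]. intros y Hy.
  destruct (Req_dec y y0) as [-> | Hne]; [exact Hpos|].
  assert (Hd : Rabs (f y - f y0) < f y0) by (apply (Hnear y); repeat split; auto).
  apply Rabs_def2 in Hd. lra.
Qed.

Lemma continuity_same_sign_near (f : R -> R) (y0 : R) :
  continuity f -> f y0 <> 0 ->
  exists del, 0 < del /\ forall y, Rabs (y - y0) < del -> 0 < f y0 * f y.
Proof.
  intros Hf Hnz. apply (continuity_pos_near (fun y => f y0 * f y)); [reg | nra].
Qed.

Lemma pencil_pos_near (f0 f1 f2 : R -> R) (y0 : R) :
  continuity f0 -> continuity f1 -> continuity f2 -> 0 < f0 y0 ->
  exists del, 0 < del /\
  forall s y, Rabs s < del -> Rabs (y - y0) < del -> 0 < quad_pencil f0 f1 f2 s y.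
Proof.
  intros C0 C1 C2 Hpos.
  set (M := Rabs (f1 y0) + Rabs (f2 y0) + 1).
  assert (HM : 1 <= M) by (unfold M; pose proof (Rabs_pos (f1 y0)); pose proof (Rabs_pos (f2 y0)); lra).
  set (e := Rmin 1 (f0 y0 / (2 * M))).
  assert (He : 0 < e /\ e <= 1 /\ e * M <= f0 y0 / 2).
  { assert (0 < f0 y0 / (2 * M)) by (apply Rdiv_lt_0_compat; lra).
    unfold e. pose proof (Rmin_l 1 (f0 y0 / (2 * M))). pose proof (Rmin_r 1 (f0 y0 / (2 * M))).
    repeat split; [apply Rmin_pos; lra | lra |].
    apply (Rle_trans _ (f0 y0 / (2 * M) * M)); [apply Rmult_le_compat_r; lra|].
    right. field. lra. }
  (* for |s| < e <= 1, |s f1 y + s^2 f2 y| <= e (|f1 y| + |f2 y|) *)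
  destruct (continuity_pos_near (fun y => f0 y - e * (Rabs (f1 y) + Rabs (f2 y))) y0)
    as [del [Hdel Hnear]].
  { reg; apply continuity_comp; auto using Rcontinuity_abs. }
  { unfold M in He. nra. }
  exists (Rmin e del). split; [apply Rmin_pos; lra|].
  intros s y Hs Hy.
  pose proof (Rmin_l e del). pose proof (Rmin_r e del).
  specialize (Hnear y ltac:(lra)). cbv beta in Hnear.
  assert (Hs2 : s ^ 2 <= e).
  { rewrite <- (pow2_abs s). pose proof (Rabs_pos s). nra. }
  assert (B1 : - (e * Rabs (f1 y)) <= s * f1 y).
  { pose proof (Rle_abs (- (s * f1 y))) as Habs. rewrite Rabs_Ropp, Rabs_mult in Habs.
    pose proof (Rabs_pos (f1 y)). nra. }
  assert (B2 : - (e * Rabs (f2 y)) <= s ^ 2 * f2 y).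
  { pose proof (Rle_abs (- f2 y)) as Habs. rewrite Rabs_Ropp in Habs.
    pose proof (Rabs_pos (f2 y)). pose proof (pow2_ge_0 s). nra. }
  unfold quad_pencil. lra.
Qed.

Lemma zeros_cluster_of_sign_change (G : R -> R -> R) (mu : R) :
  (forall x, continuity (G x)) ->
  (forall r, 0 < r -> exists y1 y2 sg,
     Rabs (y1 - mu) < r /\ Rabs (y2 - mu) < r /\
     eventually_pos (fun x => sg * G x y1) /\ eventually_pos (fun x => - sg * G x y2)) ->
  zeros_cluster G mu.
Proof.
  intros HG Hsign r Hr.
  destruct (Hsign r Hr) as (y1 & y2 & sg & Hy1 & Hy2 & [del1 [Hd1 P1]] & [del2 [Hd2 P2]]).
  set (x := Rmin r (Rmin del1 del2) / 2).
  assert (Hx : 0 < x /\ x < r /\ x < del1 /\ x < del2).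
  { unfold x. pose proof (Rmin_l r (Rmin del1 del2)). pose proof (Rmin_r r (Rmin del1 del2)).
    pose proof (Rmin_l del1 del2). pose proof (Rmin_r del1 del2).
    pose proof (Rmin_pos r (Rmin del1 del2) Hr (Rmin_pos _ _ Hd1 Hd2)). lra. }
  specialize (P1 x ltac:(lra)). specialize (P2 x ltac:(lra)).
  assert (Hbetween : Rmin (G x y1) (G x y2) <= 0 <= Rmax (G x y1) (G x y2)).
  { unfold Rmin, Rmax. destruct (Rle_dec _ _); split; nra. }
  destruct (IVT_gen (G x) y1 y2 0 (HG x) Hbetween) as [y [Hy Hzero]].
  exists x, y. repeat split; [lra | rewrite Rabs_right; lra | | exact Hzero].
  apply Rabs_def2 in Hy1. apply Rabs_def2 in Hy2. apply Rabs_def1;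
    unfold Rmin, Rmax in Hy; destruct (Rle_dec y1 y2); lra.
Qed.

Lemma Rabs_sq_lt (x del : R) : Rabs x < Rmin del 1 -> Rabs (x ^ 2) < del.
Proof.
  intros Hx. pose proof (Rmin_l del 1). pose proof (Rmin_r del 1). pose proof (Rabs_pos x).
  rewrite <- RPow_abs. nra.
Qed.

Section QuadPencil.

Variables f0 f1 f2 : R -> R.
Hypotheses (f0_cont : continuity f0) (f1_cont : continuity f1) (f2_cont : continuity f2).

Local Notation pencil := (quad_pencil f0 f1 f2).

Lemma pencil_eventually_pos (sg y : R) :
  0 < sg * f0 y \/ (f0 y = 0 /\ 0 < sg * f1 y) ->
  eventually_pos (fun x => sg * pencil (x ^ 2) y).
Proof.
  intros [Hf0 | [Hf0 Hf1]].
  - destruct (pencil_pos_near (fun y => sg * f0 y) (fun y => sg * f1 y) (fun y => sg * f2 y) y)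
      as [del [Hdel Hnear]]; [reg | reg | reg | exact Hf0 |].
    exists (Rmin del 1). split; [apply Rmin_pos; lra|]. intros x Hx.
    assert (Hs : Rabs (x ^ 2) < del) by (apply Rabs_sq_lt; rewrite Rabs_right; lra).
    specialize (Hnear (x ^ 2) y Hs ltac:(rewrite Rminus_diag, Rabs_R0; lra)).
    unfold quad_pencil in *. lra.
  - destruct (pencil_pos_near (fun y => sg * f1 y) (fun y => sg * f2 y) (fun _ => 0) y)
      as [del [Hdel Hnear]]; [reg | reg | reg | exact Hf1 |].
    exists (Rmin del 1). split; [apply Rmin_pos; lra|]. intros x Hx.
    assert (Hs : Rabs (x ^ 2) < del) by (apply Rabs_sq_lt; rewrite Rabs_right; lra).
    specialize (Hnear (x ^ 2) y Hs ltac:(rewrite Rminus_diag, Rabs_R0; lra)).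
    assert (0 < x ^ 2) by (apply pow_lt; lra).
    unfold quad_pencil in *. rewrite Hf0. nra.
Qed.

Lemma zeros_cluster_root (mu : R) :
  zeros_cluster (fun x y => pencil (x ^ 2) y) mu -> f0 mu = 0.
Proof.
  intros Hacc. destruct (Req_dec (f0 mu) 0) as [| Hnz]; [assumption | exfalso].
  destruct (pencil_pos_near (fun y => f0 mu * f0 y) (fun y => f0 mu * f1 y)
              (fun y => f0 mu * f2 y) mu) as [del [Hdel Hnear]]; [reg | reg | reg | nra |].
  destruct (Hacc (Rmin del 1) ltac:(apply Rmin_pos; lra)) as (x & y & _ & Hx & Hy & Hzero).
  pose proof (Rmin_l del 1).
  specialize (Hnear (x ^ 2) y (Rabs_sq_lt x del Hx) ltac:(lra)).
  unfold quad_pencil in *. nra.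
Qed.

Lemma not_zeros_cluster (mu del : R) :
  0 < del -> (forall y, Rabs (y - mu) < del -> 0 <= f0 y) -> 0 < f1 mu ->
  ~ zeros_cluster (fun x y => pencil (x ^ 2) y) mu.
Proof.
  intros Hdel Hf0 Hf1 Hacc.
  destruct (pencil_pos_near f1 f2 (fun _ => 0) mu) as [del' [Hdel' Hnear]];
    [assumption | assumption | reg | exact Hf1 |].
  set (r := Rmin del del').
  assert (Hr : 0 < r /\ r <= del /\ r <= del').
  { unfold r. pose proof (Rmin_l del del'). pose proof (Rmin_r del del'). split; [apply Rmin_pos|]; lra. }
  destruct (Hacc (Rmin r 1) ltac:(apply Rmin_pos; lra)) as (x & y & Hx0 & Hx & Hy & Hzero).
  pose proof (Rmin_l r 1).
  specialize (Hnear (x ^ 2) y ltac:(pose proof (Rabs_sq_lt x r Hx); lra) ltac:(lra)).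
  specialize (Hf0 y ltac:(lra)).
  assert (0 < x ^ 2) by (apply pow2_gt_0; exact Hx0).
  unfold quad_pencil in *. nra.
Qed.

Lemma zeros_cluster_odd_root (mu : R) (n : nat) (Phi : R -> R) :
  continuity Phi -> Phi mu <> 0 -> Nat.Odd n ->
  (forall y, f0 y = (y - mu) ^ n * Phi y) ->
  zeros_cluster (fun x y => pencil (x ^ 2) y) mu.
Proof.
  intros HPhi Hnz [k ->] Hfactor.
  apply zeros_cluster_of_sign_change; [intros; unfold quad_pencil; reg|].
  intros r Hr.
  destruct (continuity_same_sign_near Phi mu HPhi Hnz) as [del [Hdel Hsign]].
  set (t := Rmin del r / 2).
  assert (Ht : 0 < t /\ t < del /\ t < r).
  { unfold t. pose proof (Rmin_l del r). pose proof (Rmin_r del r).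
    pose proof (Rmin_pos del r Hdel Hr). lra. }
  assert (Htn : 0 < t ^ (2 * k + 1)) by (apply pow_lt; lra).
  assert (Hodd : (- t) ^ (2 * k + 1) = - t ^ (2 * k + 1)).
  { replace (- t) with (-1 * t) by ring.
    rewrite Rpow_mult_distr, Nat.add_1_r, pow_1_odd. ring. }
  exists (mu + t), (mu - t), (Phi mu).
  replace (mu + t - mu) with t by ring. replace (mu - t - mu) with (- t) by ring.
  rewrite Rabs_Ropp, Rabs_right by lra.
  repeat split; try lra; apply pencil_eventually_pos; left; rewrite Hfactor.
  - replace (mu + t - mu) with t by ring.
    specialize (Hsign (mu + t) ltac:(replace (mu + t - mu) with t by ring; rewrite Rabs_right; lra)).
    nra.
  - replace (mu - t - mu) with (- t) by ring. rewrite Hodd.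
    specialize (Hsign (mu - t)
      ltac:(replace (mu - t - mu) with (- t) by ring; rewrite Rabs_Ropp, Rabs_right; lra)).
    nra.
Qed.

Lemma zeros_cluster_double_root (mu : R) (Phi : R -> R) :
  continuity Phi -> f1 mu * Phi mu < 0 ->
  (forall y, f0 y = (y - mu) ^ 2 * Phi y) ->
  zeros_cluster (fun x y => pencil (x ^ 2) y) mu.
Proof.
  intros HPhi Hneg Hfactor.
  assert (Hnz : Phi mu <> 0) by (intro E; rewrite E in Hneg; lra).
  apply zeros_cluster_of_sign_change; [intros; unfold quad_pencil; reg|].
  intros r Hr.
  destruct (continuity_same_sign_near Phi mu HPhi Hnz) as [del [Hdel Hsign]].
  set (t := Rmin del r / 2).
  assert (Ht : 0 < t /\ t < del /\ t < r).
  { unfold t. pose proof (Rmin_l del r). pose proof (Rmin_r del r).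
    pose proof (Rmin_pos del r Hdel Hr). lra. }
  exists (mu + t), mu, (Phi mu).
  replace (mu + t - mu) with t by ring. rewrite Rminus_diag, Rabs_R0, Rabs_right by lra.
  repeat split; try lra; apply pencil_eventually_pos.
  - left. rewrite Hfactor. replace (mu + t - mu) with t by ring.
    specialize (Hsign (mu + t) ltac:(replace (mu + t - mu) with t by ring; rewrite Rabs_right; lra)).
    assert (0 < t ^ 2) by (apply pow_lt; lra). nra.
  - right. rewrite Hfactor, Rminus_diag. split; [ring | nra].
Qed.

End QuadPencil.

Definition curve_lin (c d beta y : R) : R :=
  2 * y * ((d + 2 * y) ^ 2 - 2 * (y ^ 2 + d * y + c)) + beta * d.

Definition curve (c d beta : R) : R -> R -> R :=
  quad_pencil (fun y => 2 * y * q_beta c d beta y) (curve_lin c d beta) (fun y => 2 * y).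

(* real and imaginary parts of c - i d w - w^2 at w = x + i y *)
Definition damp_re (c d x y : R) : R := c + d * y - x ^ 2 + y ^ 2.
Definition damp_im (d x y : R) : R := - x * (d + 2 * y).

Ltac unfold_complex := unfold Cminus, Cmult, Cplus, Copp, RtoC, Ci; cbn [fst snd].

Lemma pab_re_identity (c d alpha beta x y : R) :
  fst (pab c d alpha beta (x, y)) * damp_re c d x y
  + snd (pab c d alpha beta (x, y)) * damp_im d x y
  = (alpha - (x ^ 2 - y ^ 2)) * (damp_re c d x y ^ 2 + damp_im d x y ^ 2)
    - beta * ((x ^ 2 - y ^ 2) * damp_re c d x y + 2 * x * y * damp_im d x y).
Proof. unfold pab, damp_re, damp_im; unfold_complex; ring. Qed.

Lemma pab_im_identity (c d alpha beta x y : R) :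
  snd (pab c d alpha beta (x, y)) * damp_re c d x y
  - fst (pab c d alpha beta (x, y)) * damp_im d x y
  = - x * curve c d beta (x ^ 2) y.
Proof. unfold pab, curve, quad_pencil, curve_lin, q_beta, damp_re, damp_im; unfold_complex; field. Qed.

Lemma delta_plus_eq (c d : R) :
  delta_plus c d = (fst (psqrt (c - d ^ 2 / 4)), snd (psqrt (c - d ^ 2 / 4)) - d / 2).
Proof. unfold delta_plus; unfold_complex; f_equal; ring. Qed.

Lemma delta_minus_eq (c d : R) :
  delta_minus c d = (- fst (psqrt (c - d ^ 2 / 4)), - snd (psqrt (c - d ^ 2 / 4)) - d / 2).
Proof. unfold delta_minus; unfold_complex; f_equal; ring. Qed.

Lemma delta_iff_damp_zero (c d x y : R) : x <> 0 ->
  ((x, y) = delta_plus c d \/ (x, y) = delta_minus c d) <->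
  damp_re c d x y = 0 /\ damp_im d x y = 0.
Proof.
  intros Hx. rewrite delta_plus_eq, delta_minus_eq, !pair_equal_spec.
  unfold damp_re, damp_im, psqrt. cbn [fst snd].
  destruct (Rle_dec 0 (c - d ^ 2 / 4)) as [Hk | Hk]; cbn [fst snd].
  - pose proof (pow2_sqrt _ Hk). split.
    + intros [[-> ->] | [-> ->]]; split; nra.
    + intros [Hre Him].
      assert (Hy : y = - (d / 2)) by (destruct (Rmult_integral _ _ Him); lra).
      assert (Hx2 : x ^ 2 = c - d ^ 2 / 4) by (subst y; lra).
      rewrite <- Hx2, <- (Rsqr_pow2 x).
      destruct (Rle_lt_dec 0 x); [left | right].
      * rewrite sqrt_Rsqr; lra.
      * rewrite sqrt_Rsqr_abs, Rabs_left; lra.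
  - split.
    + intros [[-> _] | [Hx0 _]]; lra.
    + intros [Hre Him].
      assert (Hy : y = - (d / 2)) by (destruct (Rmult_integral _ _ Him); lra).
      subst y. pose proof (pow2_ge_0 x). lra.
Qed.

Lemma W_minus_iR_Some (c d beta x y : R) :
  W_minus_iR c d beta (Some (x, y)) <-> x <> 0 /\ curve c d beta (x ^ 2) y = 0.
Proof.
  unfold W_minus_iR, W_beta, in_iR. cbn [fst].
  split.
  - intros [HW Hx]. split; [exact Hx|].
    assert (Him : x * curve c d beta (x ^ 2) y = 0).
    { destruct HW as [[alpha Hp] | Hdelta].
      + pose proof (pab_im_identity c d alpha beta x y) as E.
        rewrite Hp in E. unfold RtoC in E; cbn [fst snd] in E. lra.
      + apply (delta_iff_damp_zero c d x y Hx) in Hdelta as [Hre Hi].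
        pose proof (pab_im_identity c d 0 beta x y) as E.
        rewrite Hre, Hi in E. lra. }
    destruct (Rmult_integral _ _ Him); [contradiction | assumption].
  - intros [Hx Hcurve]. split; [|exact Hx].
    set (A := damp_re c d x y). set (B := damp_im d x y).
    destruct (Req_dec (A ^ 2 + B ^ 2) 0) as [HAB | HAB].
    + right. apply (delta_iff_damp_zero c d x y Hx). split; fold A B; nra.
    + left.
      (* this alpha makes the real part of p * conj(e) vanish *)
      set (alpha := x ^ 2 - y ^ 2 + beta * ((x ^ 2 - y ^ 2) * A + 2 * x * y * B) / (A ^ 2 + B ^ 2)).
      exists alpha.
      pose proof (pab_re_identity c d alpha beta x y) as Ere.
      pose proof (pab_im_identity c d alpha beta x y) as Eim.
      fold A B in Ere, Eim. rewrite Hcurve in Eim.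
      replace ((alpha - (x ^ 2 - y ^ 2)) * (A ^ 2 + B ^ 2)
               - beta * ((x ^ 2 - y ^ 2) * A + 2 * x * y * B)) with 0 in Ere
        by (unfold alpha; field; exact HAB).
      set (p := pab c d alpha beta (x, y)) in *.
      assert (H1 : fst p * (A ^ 2 + B ^ 2) = 0).
      { replace (fst p * (A ^ 2 + B ^ 2))
          with ((fst p * A + snd p * B) * A - (snd p * A - fst p * B) * B) by ring.
        rewrite Ere, Eim. ring. }
      assert (H2 : snd p * (A ^ 2 + B ^ 2) = 0).
      { replace (snd p * (A ^ 2 + B ^ 2))
          with ((fst p * A + snd p * B) * B + (snd p * A - fst p * B) * A) by ring.
        rewrite Ere, Eim. ring. }
      apply injective_projections; cbn.
      * destruct (Rmult_integral _ _ H1); [assumption | contradiction].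
      * destruct (Rmult_integral _ _ H2); [assumption | contradiction].
Qed.

Lemma closure_W_minus_iR_iff (c d beta mu : R) :
  in_sphere_closure (W_minus_iR c d beta) (Some (0, mu)) <->
  zeros_cluster (fun x y => curve c d beta (x ^ 2) y) mu.
Proof.
  rewrite in_sphere_closure_Some. split.
  - intros Hcl r Hr.
    destruct (Hcl r Hr) as [[x y] [HW Hdist]].
    apply W_minus_iR_Some in HW as [Hx Hzero].
    pose proof (Rmax_Cmod ((0, mu) - (x, y))%C) as Hmax. cbn [fst snd Cminus Cplus Copp] in Hmax.
    pose proof (Rmax_l (Rabs (0 + - x)) (Rabs (mu + - y))).
    pose proof (Rmax_r (Rabs (0 + - x)) (Rabs (mu + - y))).
    replace (0 + - x) with (- x) in * by ring. rewrite Rabs_Ropp in *.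
    replace (mu + - y) with (- (y - mu)) in * by ring. rewrite Rabs_Ropp in *.
    exists x, y. repeat split; [exact Hx | lra | lra | exact Hzero].
  - intros Hacc r Hr.
    destruct (Hacc (r / 2) ltac:(lra)) as (x & y & Hx0 & Hx & Hy & Hzero).
    exists (x, y). split; [apply W_minus_iR_Some; split; assumption|].
    pose proof (Cmod_2Rmax ((0, mu) - (x, y))%C) as Hmax. cbn [fst snd Cminus Cplus Copp] in Hmax.
    replace (0 + - x) with (- x) in Hmax by ring.
    replace (mu + - y) with (- (y - mu)) in Hmax by ring. rewrite !Rabs_Ropp in Hmax.
    assert (Hsqrt2 : sqrt 2 < 2).
    { pose proof (pow2_sqrt 2 ltac:(lra)). pose proof (sqrt_pos 2). nra. }
    assert (Rmax (Rabs x) (Rabs (y - mu)) < r / 2) by (apply Rmax_lub_lt; assumption).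
    pose proof (Rle_trans _ _ _ (Rabs_pos x) (Rmax_l (Rabs x) (Rabs (y - mu)))).
    nra.
Qed.

Definition qdiv1 (c d beta mu y : R) : R :=
  (y ^ 3 + y ^ 2 * mu + y * mu ^ 2 + mu ^ 3) + 2 * d * (y ^ 2 + y * mu + mu ^ 2)
  + (2 * c + d ^ 2) * (y + mu) + d * (beta / 2 + 2 * c).
Definition qdiv2 (c d mu y : R) : R :=
  y ^ 2 + 2 * mu * y + 3 * mu ^ 2 + 2 * d * y + 4 * d * mu + (2 * c + d ^ 2).
Definition qdiv3 (d mu y : R) : R := y + 3 * mu + 2 * d.

Lemma q_beta_expand (c d beta mu y : R) :
  q_beta c d beta y = q_beta c d beta mu + (y - mu) * qdiv1 c d beta mu y.
Proof. unfold q_beta, qdiv1. field. Qed.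

Lemma qdiv1_expand (c d beta mu y : R) :
  qdiv1 c d beta mu y = qdiv1 c d beta mu mu + (y - mu) * qdiv2 c d mu y.
Proof. unfold qdiv1, qdiv2. field. Qed.

Lemma qdiv2_expand (c d mu y : R) :
  qdiv2 c d mu y = qdiv2 c d mu mu + (y - mu) * qdiv3 d mu y.
Proof. unfold qdiv2, qdiv3. ring. Qed.

Lemma qdiv1_diag (c d beta mu : R) :
  qdiv1 c d beta mu mu = 2 * (mu ^ 2 + d * mu + c) * (2 * mu + d) + beta * d / 2.
Proof. unfold qdiv1. field. Qed.

Lemma curve_lin_double_root_identity (c d beta mu : R) :
  let A := mu ^ 2 + d * mu + c in
  A * (3 * curve_lin c d beta mu + 2 * mu * qdiv2 c d mu mu)
  = 4 * (d * q_beta c d beta mu - (2 * A - mu * (2 * mu + d)) * qdiv1 c d beta mu mu)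
    + 6 * A * qdiv1 c d beta mu mu.
Proof. intros A. unfold A, curve_lin, qdiv1, qdiv2, q_beta. field. Qed.

Lemma curve_coeffs_continuous (c d beta : R) :
  continuity (fun y => 2 * y * q_beta c d beta y) /\
  continuity (curve_lin c d beta) /\ continuity (fun y => 2 * y).
Proof. unfold q_beta, curve_lin. repeat split; reg. Qed.

Lemma curve_cluster_root (c d beta mu : R) :
  zeros_cluster (fun x y => curve c d beta (x ^ 2) y) mu ->
  mu = 0 \/ q_beta c d beta mu = 0.
Proof.
  intros Hacc. destruct (curve_coeffs_continuous c d beta) as (C0 & C1 & C2).
  pose proof (zeros_cluster_root _ _ _ C0 C1 C2 mu Hacc) as Hroot.
  destruct (Rmult_integral _ _ Hroot) as [H | H]; [left; lra | right; exact H].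
Qed.

Lemma curve_lin_double_root (c d beta mu : R) : 0 < d -> 0 < beta ->
  q_beta c d beta mu = 0 -> qdiv1 c d beta mu mu = 0 ->
  3 * curve_lin c d beta mu + 2 * mu * qdiv2 c d mu mu = 0.
Proof.
  intros Hd Hb Hq Hq1.
  pose proof (curve_lin_double_root_identity c d beta mu) as E. cbv zeta in E.
  rewrite Hq, Hq1 in E.
  assert (HA : mu ^ 2 + d * mu + c <> 0).
  { intro HA. rewrite qdiv1_diag, HA in Hq1. nra. }
  apply (Rmult_eq_reg_l (mu ^ 2 + d * mu + c)); [lra | exact HA].
Qed.

Lemma curve_cluster_q_root (c d beta mu : R) : 0 < d -> 0 < beta -> mu <> 0 ->
  q_beta c d beta mu = 0 -> zeros_cluster (fun x y => curve c d beta (x ^ 2) y) mu.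
Proof.
  intros Hd Hb Hmu Hq. destruct (curve_coeffs_continuous c d beta) as (C0 & C1 & C2).
  assert (Hmu2 : 0 < mu ^ 2) by (apply pow2_gt_0; exact Hmu).
  destruct (Req_dec (qdiv1 c d beta mu mu) 0) as [Hq1 | Hq1].
  2: { apply (zeros_cluster_odd_root _ _ _ C0 C1 C2 mu 1 (fun y => 2 * y * qdiv1 c d beta mu y)).
       - unfold qdiv1; reg.
       - cbv beta. intro E. destruct (Rmult_integral _ _ E) as [E' | E']; [lra | contradiction].
       - exists 0%nat. reflexivity.
       - intros y. rewrite (q_beta_expand c d beta mu y), Hq. ring. }
  destruct (Req_dec (qdiv2 c d mu mu) 0) as [Hq2 | Hq2].
  - apply (zeros_cluster_odd_root _ _ _ C0 C1 C2 mu 3 (fun y => 2 * y * qdiv3 d mu y)).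
    + unfold qdiv3; reg.
    + cbv beta. unfold qdiv3. intro E.
      assert (HD : 2 * mu + d = 0) by (destruct (Rmult_integral _ _ E); nra).
      rewrite qdiv1_diag, HD in Hq1. nra.
    + exists 1%nat. reflexivity.
    + intros y. rewrite (q_beta_expand c d beta mu y), (qdiv1_expand c d beta mu y),
        (qdiv2_expand c d mu y), Hq, Hq1, Hq2. ring.
  - apply (zeros_cluster_double_root _ _ _ C0 C1 C2 mu (fun y => 2 * y * qdiv2 c d mu y)).
    + unfold qdiv2; reg.
    + cbv beta. pose proof (curve_lin_double_root c d beta mu Hd Hb Hq Hq1).
      assert (0 < qdiv2 c d mu mu ^ 2) by (apply pow2_gt_0; exact Hq2). nra.
    + intros y. rewrite (q_beta_expand c d beta mu y), (qdiv1_expand c d beta mu y), Hq, Hq1. ring.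
Qed.

Lemma curve_cluster_zero (c d beta : R) : 0 < c -> 0 < beta ->
  zeros_cluster (fun x y => curve c d beta (x ^ 2) y) 0.
Proof.
  intros Hc Hb. destruct (curve_coeffs_continuous c d beta) as (C0 & C1 & C2).
  apply (zeros_cluster_odd_root _ _ _ C0 C1 C2 0 1 (fun y => 2 * q_beta c d beta y)).
  - unfold q_beta; reg.
  - unfold q_beta. nra.
  - exists 0%nat. reflexivity.
  - intros y. ring.
Qed.

Lemma curve_not_cluster_zero (d beta : R) : 0 < d -> 0 < beta ->
  ~ zeros_cluster (fun x y => curve 0 d beta (x ^ 2) y) 0.
Proof.
  intros Hd Hb. destruct (curve_coeffs_continuous 0 d beta) as (_ & C1 & C2).
  destruct (continuity_pos_near (fun y => 2 * y ^ 3 + 4 * d * y ^ 2 + 2 * d ^ 2 * y + beta * d) 0)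
    as [del [Hdel Hpos]]; [reg | nra |].
  apply (not_zeros_cluster _ _ _ C1 C2 0 del Hdel).
  - intros y Hy. specialize (Hpos y Hy).
    replace (2 * y * q_beta 0 d beta y)
      with (y ^ 2 * (2 * y ^ 3 + 4 * d * y ^ 2 + 2 * d ^ 2 * y + beta * d)) by (unfold q_beta; field).
    pose proof (pow2_ge_0 y). nra.
  - unfold curve_lin. nra.
Qed.

Theorem proposition3p2 (c d beta : R) (hc : 0 <= c) (hd : 0 < d) (hb : 0 < beta) :
  (0 < c -> forall mu : R,
     in_sphere_closure (W_minus_iR c d beta) (Some (0, mu))
     <-> (mu = 0 \/ q_beta c d beta mu = 0)) /\
  (c = 0 -> forall mu : R,
     in_sphere_closure (W_minus_iR c d beta) (Some (0, mu))
     <-> (mu <> 0 /\ q_beta c d beta mu = 0)).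
Proof.
  split; intros Hc mu; rewrite closure_W_minus_iR_iff; split.
  - apply curve_cluster_root.
  - intros Hroot. destruct (Req_dec mu 0) as [-> | Hmu].
    + exact (curve_cluster_zero c d beta Hc hb).
    + destruct Hroot as [| Hq]; [contradiction|].
      exact (curve_cluster_q_root c d beta mu hd hb Hmu Hq).
  - subst c. intros Hacc. destruct (Req_dec mu 0) as [-> | Hmu].
    + exfalso. exact (curve_not_cluster_zero d beta hd hb Hacc).
    + split; [exact Hmu|].
      destruct (curve_cluster_root 0 d beta mu Hacc); [contradiction | assumption].
  - intros [Hmu Hq]. exact (curve_cluster_q_root c d beta mu hd hb Hmu Hq).
Qed.
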